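(* Let $\Gamma$ be a commutative group (written multiplicatively, neutral element $1$) and let $(X,\circ_{\varepsilon})_{\varepsilon\in\Gamma}$ be a $\Gamma$-idempotent right quasigroup. For $x,u,v\in X$ and $\varepsilon\in\Gamma$ define $$\Delta^{x}_{\varepsilon}(u,v)=(x\circ_{\varepsilon}u)\bullet_{\varepsilon}(x\circ_{\varepsilon}v),\qquad \Sigma^{x}_{\varepsilon}(u,v)=x\bullet_{\varepsilon}\big((x\circ_{\varepsilon}u)\circ_{\varepsilon}v\big),\qquad inv^{x}_{\varepsilon}u=(x\circ_{\varepsilon}u)\bullet_{\varepsilon}x .$$ Then for all $x,u,v,w\in X$ and $\varepsilon\in\Gamma$: (a) $\Delta^{x}_{\varepsilon}(u,\Sigma^{x}_{\varepsilon}(u,v))=v$; (b) $\Sigma^{x}_{\varepsilon}(u,\Delta^{x}_{\varepsilon}(u,v))=v$; (c) $\Delta^{x}_{\varepsilon}(u,v)=\Sigma^{x\circ_{\varepsilon}u}_{\varepsilon}(inv^{x}_{\varepsilon}u,v)$; (d) $inv^{x\circ_{\varepsilon}u}_{\varepsilon}\,inv^{x}_{\varepsilon}u=u$; (e) $\Sigma^{x}_{\varepsilon}(u,\Sigma^{x\circ_{\varepsilon}u}_{\varepsilon}(v,w))=\Sigma^{x}_{\varepsilon}(\Sigma^{x}_{\varepsilon}(u,v),w)$; (f) $inv^{x}_{\varepsilon}u=\Delta^{x}_{\varepsilon}(u,x)$; (g) $\Sigma^{x}_{\varepsilon}(x,u)=u$.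
   Context: An idempotent right quasigroup (irq) is a set $X$ with two binary operations $\circ,\bullet$ such that for all $x,y\in X$: $x\circ x=x\bullet x=x$ and $x\circ(x\bullet y)=x\bullet(x\circ y)=y$ (equivalently, for each $a,b$ the equation $a\circ z=b$ has a unique solution $z=a\bullet b$, and $\circ$ is idempotent). Given a commutative group $\Gamma$, a $\Gamma$-idempotent right quasigroup is a set $X$ with a map $\varepsilon\mapsto\circ_{\varepsilon}$ ($\varepsilon\in\Gamma$) such that each $(X,\circ_{\varepsilon})$ is an irq (with inverse operation denoted $\bullet_{\varepsilon}$) and $x\circ_{\varepsilon}(x\circ_{\mu}y)=x\circ_{\varepsilon\mu}y$ for all $\varepsilon,\mu\in\Gamma$, $x,y\in X$. *)

(* The commutative group Gamma is modelled as a zmodType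
   (abelian group, written additively: epsilon*mu is written e + m). *)
From HB Require Import structures.
From mathcomp Require Import all_boot all_order all_algebra.
Set Implicit Arguments. Unset Strict Implicit. Unset Printing Implicit Defensive.
Import GRing.Theory.
Local Open Scope ring_scope.

Definition irq (X : Type) (circ bullet : X -> X -> X) : Prop :=
  (forall x, circ x x = x) /\ (forall x, bullet x x = x) /\
  (forall x y, circ x (bullet x y) = y) /\ (forall x y, bullet x (circ x y) = y).

Definition gamma_irq (G : zmodType) (X : Type)
  (circ bullet : G -> X -> X -> X) : Prop :=
  (forall e, irq (circ e) (bullet e)) /\
  (forall (e m : G) (x y : X), circ e x (circ m x y) = circ (e + m) x y).

Section Ops.
Variables (G : zmodType) (X : Type) (circ bullet : G -> X -> X -> X).
Definition Delta (e : G) (x u v : X) : X := bullet e (circ e x u) (circ e x v).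
Definition Sigma (e : G) (x u v : X) : X := bullet e x (circ e (circ e x u) v).
Definition inv_ (e : G) (x u : X) : X := bullet e (circ e x u) x.
End Ops.

(* Only the single quasigroup (X, o_e, •_e) is needed: each identity follows
   by cancelling x o_e (x •_e y) = y and x •_e (x o_e y) = y, together with
   idempotence x o_e x = x for (f) and (g). *)
From mathcomp Require Import all_boot all_order all_algebra.

Set Implicit Arguments.
Unset Strict Implicit.
Unset Printing Implicit Defensive.

Section IrqCalculus.

Variables (G : zmodType) (X : Type) (circ bullet : G -> X -> X -> X) (e : G).
Hypothesis irq_e : irq (circ e) (bullet e).

Let circ_id (x : X) : circ e x x = x.
Proof. by case: irq_e. Qed.

Let circ_bulletK (x y : X) : circ e x (bullet e x y) = y.
Proof. by case: irq_e => _ [_ []]. Qed.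

Let bullet_circK (x y : X) : bullet e x (circ e x y) = y.
Proof. by case: irq_e => _ [_ []]. Qed.

Lemma Delta_SigmaK (x u v : X) :
  Delta circ bullet e x u (Sigma circ bullet e x u v) = v.
Proof. by rewrite /Delta /Sigma circ_bulletK bullet_circK. Qed.

Lemma Sigma_DeltaK (x u v : X) :
  Sigma circ bullet e x u (Delta circ bullet e x u v) = v.
Proof. by rewrite /Delta /Sigma circ_bulletK bullet_circK. Qed.

Lemma Delta_Sigma_inv (x u v : X) :
  Delta circ bullet e x u v
  = Sigma circ bullet e (circ e x u) (inv_ circ bullet e x u) v.
Proof. by rewrite /Delta /Sigma /inv_ circ_bulletK. Qed.

Lemma invK (x u : X) :
  inv_ circ bullet e (circ e x u) (inv_ circ bullet e x u) = u.
Proof. by rewrite /inv_ circ_bulletK bullet_circK. Qed.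

Lemma Sigma_assoc (x u v w : X) :
  Sigma circ bullet e x u (Sigma circ bullet e (circ e x u) v w)
  = Sigma circ bullet e x (Sigma circ bullet e x u v) w.
Proof. by rewrite /Sigma !circ_bulletK. Qed.

Lemma inv_Delta (x u : X) :
  inv_ circ bullet e x u = Delta circ bullet e x u x.
Proof. by rewrite /inv_ /Delta circ_id. Qed.

Lemma Sigma_basepoint (x u : X) : Sigma circ bullet e x x u = u.
Proof. by rewrite /Sigma circ_id bullet_circK. Qed.

End IrqCalculus.

Theorem proposition3p5 (G : zmodType) (X : Type) (circ bullet : G -> X -> X -> X) :
  gamma_irq circ bullet ->
  forall (e : G) (x u v w : X),
    (* (a) *) Delta circ bullet e x u (Sigma circ bullet e x u v) = v /\
    (* (b) *) Sigma circ bullet e x u (Delta circ bullet e x u v) = v /\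
    (* (c) *) Delta circ bullet e x u v
                = Sigma circ bullet e (circ e x u) (inv_ circ bullet e x u) v /\
    (* (d) *) inv_ circ bullet e (circ e x u) (inv_ circ bullet e x u) = u /\
    (* (e) *) Sigma circ bullet e x u (Sigma circ bullet e (circ e x u) v w)
                = Sigma circ bullet e x (Sigma circ bullet e x u v) w /\
    (* (f) *) inv_ circ bullet e x u = Delta circ bullet e x u x /\
    (* (g) *) Sigma circ bullet e x x u = u.
Proof.
move=> [irq_all _] e x u v w; have irq_e := irq_all e.
split; first exact: Delta_SigmaK.
split; first exact: Sigma_DeltaK.
split; first exact: Delta_Sigma_inv.
split; first exact: invK.
split; first exact: Sigma_assoc.
split; first exact: inv_Delta.
exact: Sigma_basepoint.
Qed.
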